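(* Let $X$ and $Y$ be real Banach spaces with $Y\neq\{0\}$. Then the adjoint $(\beta_X^Y)^*:X^*\to F_Y(X)^*$ is an isometry.
   Context: $Lip_0(X,Y)$ is the Banach space of Lipschitz maps $f:X\to Y$ with $f(0)=0$ and norm $Lip(f)=\sup_{x\neq y}\|f(x)-f(y)\|/\|x-y\|$. For $x\in X$, $\delta_x^Y\in L(Lip_0(X,Y),Y)$ is evaluation $\delta_x^Y(f)=f(x)$. $F_Y(X)$ is the norm-closed linear span of $\{\delta_x^Y:x\in X\}$ in $L(Lip_0(X,Y),Y)$. $\beta_X^Y:F_Y(X)\to X$ is the bounded linear contraction given on finite combinations by $\beta_X^Y(\sum_{i}\alpha_i\delta_{x_i}^Y)=\sum_i\alpha_ix_i$ and extended by continuity. *)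

From HB Require Import structures.
From mathcomp Require Import all_boot all_order all_algebra.
From mathcomp Require Import all_classical all_reals all_analysis.
Set Implicit Arguments. Unset Strict Implicit. Unset Printing Implicit Defensive.
Import Order.TTheory GRing.Theory Num.Theory.
Import numFieldNormedType.Exports.
Local Open Scope classical_set_scope.
Local Open Scope ring_scope.

Section LipFree.
Variables (R : realType) (X Y : normedModType R).

Definition lipnorm (f : X -> Y) : \bar R :=
  ereal_sup [set ((`|f p.1 - f p.2| / `|p.1 - p.2|)%:E) | p in [set p : X * X | p.1 != p.2]].

Definition Lip0 : set (X -> Y) :=
  [set f | f 0 = 0 /\ (lipnorm f < +oo)%E].

(* An element of L(Lip_0(X,Y),Y) is represented by a map T : (X -> Y) -> Y,
   of which only the restriction to Lip_0(X,Y) is relevant. *)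
Definition op_norm (T : (X -> Y) -> Y) : \bar R :=
  ereal_sup [set (`|T f|)%:E | f in [set f | Lip0 f /\ (lipnorm f <= 1)%E]].

Definition is_bounded_linear_op (T : (X -> Y) -> Y) : Prop :=
  (forall (a : R) (f g : X -> Y), Lip0 f -> Lip0 g ->
      T (fun x => a *: f x + g x) = a *: T f + T g)
  /\ (op_norm T < +oo)%E.

Definition delta (x : X) : (X -> Y) -> Y := fun f => f x.

Definition delta_comb (s : seq (R * X)) : (X -> Y) -> Y :=
  fun f => \sum_(p <- s) p.1 *: delta p.2 f.

Definition beta_comb (s : seq (R * X)) : X := \sum_(p <- s) p.1 *: p.2.

(* F_Y(X): norm closure in L(Lip_0(X,Y),Y) of the linear span of the delta_x *)
Definition FYX : set ((X -> Y) -> Y) :=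
  [set T | is_bounded_linear_op T /\
     forall e : R, 0 < e -> exists s : seq (R * X),
        (op_norm (fun f => (T f - delta_comb s f)%R) < e%:E)%E].

Definition beta_limit (T : (X -> Y) -> Y) (x : X) : Prop :=
  forall e : R, 0 < e -> exists2 d : R, 0 < d &
    forall s : seq (R * X),
      (op_norm (fun f => (T f - delta_comb s f)%R) < d%:E)%E -> `|x - beta_comb s| < e.

(* beta_X^Y : F_Y(X) -> X, extended by continuity *)
Definition beta (T : (X -> Y) -> Y) : X := xget 0 [set x | beta_limit T x].

(* norm in F_Y(X)^* of the adjoint (beta_X^Y)^* phi = phi \o beta_X^Y *)
Definition adj_beta_norm (phi : X -> R) : \bar R :=
  ereal_sup [set (`|phi (beta T)|)%:E | T in [set T | FYX T /\ (op_norm T <= 1)%E]].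

Definition dual_norm (phi : X -> R) : \bar R :=
  ereal_sup [set (`|phi x|)%:E | x in [set x : X | `|x| <= 1]].

End LipFree.

From HB Require Import structures.
From mathcomp Require Import all_boot all_order all_algebra.
From mathcomp Require Import all_classical all_reals all_analysis.
From mathcomp Require Import lra.
Set Implicit Arguments.
Unset Strict Implicit.
Unset Printing Implicit Defensive.
Import Order.TTheory GRing.Theory Num.Theory.
Import numFieldNormedType.Exports.
Local Open Scope classical_set_scope.
Local Open Scope ring_scope.

(* Since the adjoint sends phi to phi \o beta, it suffices that beta maps the
   closed unit ball of F_Y(X) onto that of X.  Each delta_x has norm at most |x| and beta delta_x = x.
   Conversely beta is a contraction: for a finite combination
   mu = sum_i a_i delta_{x_i} with v = sum_i a_i x_i, a finite-dimensional
   Hahn-Banach argument yields a functional psi of norm at most 1 on the span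
   of v and the x_i with psi v = |v|; the McShane extension F of x_i |-> psi x_i
   is 1-Lipschitz, so F(.) y with |y| = 1 lies in the unit ball of Lip_0(X,Y),
   and mu sends it to |v| y.  Approximation by finite combinations carries the
   bound over to all of F_Y(X). *)

Section FiniteHahnBanach.
Variables (R : realType) (X : normedModType R).
Implicit Types (x : nat -> X) (c al : nat -> R).

(* [c i = psi (x i)] for a linear functional [psi] of norm at most 1 on the
   span of the [x i], [i < n]. *)
Definition norm_dominated n x c :=
  forall al, \sum_(i < n) al i * c i <= `|\sum_(i < n) al i *: x i|.

Lemma sum_ord_pred1 {V : nmodType} (F : nat -> V) n i : (i < n)%N ->
  \sum_(k < n) (if (k : nat) == i then F k else 0) = F i.
Proof.
move=> lt_in; rewrite (bigD1 (Ordinal lt_in)) //= eqxx big1 ?addr0 // => k.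
by rewrite -val_eqE /= => /negPf ->.
Qed.

Lemma norm_dominated_le n x c i : norm_dominated n x c -> (i < n)%N ->
  `|c i| <= `|x i|.
Proof.
move=> dom lt_in.
have dom_i s : s * c i <= `|s *: x i|.
  have := dom (fun k => if k == i then s else 0).
  under eq_bigr do rewrite (fun_if (fun a => a * _)) mul0r.
  under [X in _ <= `|X|]eq_bigr do rewrite (fun_if (fun a => a *: _)) scale0r.
  rewrite (sum_ord_pred1 (fun k => s * c k)) //.
  by rewrite (sum_ord_pred1 (fun k => s *: x k)).
rewrite ler_norml; have := dom_i 1; have := dom_i (-1).
by rewrite scale1r scaleN1r normrN mul1r mulN1r lerNl => -> ->.
Qed.

Lemma norm_dominated_sub n x c i j : norm_dominated n x c ->
  (i < n)%N -> (j < n)%N -> c i - c j <= `|x i - x j|.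
Proof.
move=> dom lt_in lt_jn.
have := dom (fun k => (if k == i then 1 else 0) - (if k == j then 1 else 0)).
under eq_bigr do rewrite mulrBl !(fun_if (fun a => a * _)) !mul0r !mul1r.
under [X in _ <= `|X|]eq_bigr do
  rewrite scalerBl !(fun_if (fun a => a *: _)) !scale0r !scale1r.
by rewrite !sumrB !(sum_ord_pred1 c) // !(sum_ord_pred1 x).
Qed.

Lemma norm_dominated_eq0 n x c al : norm_dominated n x c ->
  \sum_(i < n) al i *: x i = 0 -> \sum_(i < n) al i * c i = 0.
Proof.
move=> dom al_x0; apply/eqP; rewrite eq_le; apply/andP; split.
  by apply: le_trans (dom al) _; rewrite al_x0 normr0.
have := dom (fun i => - al i).
under eq_bigr do rewrite mulNr.
under [X in _ <= `|X|]eq_bigr do rewrite scaleNr.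
by rewrite !sumrN normrN al_x0 normr0 oppr_le0.
Qed.

Lemma norm_dominated_extend n x c : norm_dominated n x c ->
  exists g, norm_dominated n.+1 x (fun i => if i == n then g else c i).
Proof.
move=> dom.
pose psi al := \sum_(i < n) al i * c i.
pose w al := \sum_(i < n) al i *: x i.
have psiZ k al : psi (fun i => k * al i) = k * psi al.
  by rewrite /psi mulr_sumr; apply: eq_bigr => i _; rewrite mulrA.
have wZ k al : w (fun i => k * al i) = k *: w al.
  by rewrite /w scaler_sumr; apply: eq_bigr => i _; rewrite scalerA.
have separation al be : psi al - `|w al - x n| <= `|w be + x n| - psi be.
  have := dom (fun i => al i + be i).
  under eq_bigr do rewrite mulrDl.
  under [X in _ <= `|X|]eq_bigr do rewrite scalerDl.
  rewrite !big_split /= -/(psi al) -/(psi be) -/(w al) -/(w be) => dom_ab.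
  have := ler_normD (w al - x n) (w be + x n).
  rewrite addrACA addNr addr0; lra.
(* Any value between the two sides of [separation] extends [c]; take the sup. *)
pose S := [set psi al - `|w al - x n| | al in [set: nat -> R]].
have S_sup : has_sup S.
  split; first by exists (psi (fun=> 0) - `|w (fun=> 0) - x n|), (fun=> 0).
  exists (`|w (fun=> 0) + x n| - psi (fun=> 0)) => _ [al _ <-].
  exact: separation.
have g_ge al : psi al - `|w al - x n| <= sup S.
  by apply: sup_upper_bound => //; exists al.
have g_le be : sup S <= `|w be + x n| - psi be.
  by apply: ge_sup => [|_ [al _ <-]]; [case: S_sup|exact: separation].
exists (sup S) => al; rewrite !big_ord_recr /= eqxx.
rewrite (eq_bigr (fun i : 'I_n => al i * c i)) => [|i _]; last by rewrite ltn_eqF.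
rewrite -/(psi al) -/(w al).
have [al_n_gt0|al_n_lt0|->] := ltrgt0P (al n); last first.
- by rewrite mul0r scale0r !addr0; exact: dom.
- have := g_ge (fun i => (- al n)^-1 * al i); rewrite psiZ wZ.
  have -> : (- al n)^-1 *: w al - x n = (- al n)^-1 *: (w al + al n *: x n).
    by rewrite scalerDr scalerA invrN mulNr mulVf ?lt_eqF // scaleN1r.
  rewrite normrZ gtr0_norm ?invr_gt0 ?oppr_gt0 // -mulrBr.
  by rewrite ler_pdivrMl ?oppr_gt0 // mulrC; lra.
- have := g_le (fun i => (al n)^-1 * al i); rewrite psiZ wZ.
  have -> : (al n)^-1 *: w al + x n = (al n)^-1 *: (w al + al n *: x n).
    by rewrite scalerDr scalerA mulVf ?gt_eqF // scale1r.
  rewrite normrZ gtr0_norm ?invr_gt0 // -mulrBr.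
  by rewrite ler_pdivlMl // mulrC; lra.
Qed.

Lemma norm_dominated_exists x n :
  exists c, c 0%N = `|x 0%N| /\ norm_dominated n.+1 x c.
Proof.
elim: n => [|n [c [c0 dom]]].
  exists (fun=> `|x 0%N|); split => // al.
  by rewrite !big_ord1 normrZ ler_wpM2r // ler_norm.
have [g dom'] := norm_dominated_extend dom.
by exists (fun i => if i == n.+1 then g else c i).
Qed.

End FiniteHahnBanach.

Section McShane.
Variables (R : realType) (X : normedModType R).
Variables (n : nat) (x : nat -> X) (c : nat -> R).

(* McShane's extension of the partial map [x k |-> c k], [0 |-> 0]. *)
Definition mcshane (z : X) : R := \big[Num.min/`|z|]_(k < n) (c k + `|z - x k|).

Lemma mcshane_lipschitz z z' : `|mcshane z - mcshane z'| <= `|z - z'|.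
Proof.
suff le_mcshane u u' : mcshane u' - `|u - u'| <= mcshane u.
  have := le_mcshane z z'; have := le_mcshane z' z; rewrite (distrC z') => h h'.
  by rewrite ler_norml; apply/andP; split; lra.
have m_le : mcshane u' <= `|u'| := bigmin_le_id _ _ _ _.
have m_le_k (k : 'I_n) : mcshane u' <= c k + `|u' - x k| := bigmin_le _ k _.
apply: le_bigmin => [|k _].
  by have := ler_distD u u' 0; rewrite !subr0 (distrC u' u); lra.
by have := m_le_k k; have := ler_distD u u' (x k); rewrite (distrC u' u); lra.
Qed.

Hypothesis c_le : forall i, (i < n)%N -> `|c i| <= `|x i|.
Hypothesis c_sub : forall i j, (i < n)%N -> (j < n)%N -> c i - c j <= `|x i - x j|.

Lemma mcshane0 : mcshane 0 = 0.
Proof.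
apply/le_anti; rewrite {1}/mcshane normr0 bigmin_le_id /=.
apply: le_bigmin => // k _; rewrite sub0r normrN.
by have := c_le (ltn_ord k); rewrite ler_norml; lra.
Qed.

Lemma mcshane_interp j : (j < n)%N -> mcshane (x j) = c j.
Proof.
move=> lt_jn; apply/le_anti/andP; split.
  have : mcshane (x j) <= c j + `|x j - x j| := bigmin_le _ (Ordinal lt_jn) _.
  by rewrite subrr normr0 addr0.
apply: le_bigmin => [|k _]; first by have := c_le lt_jn; rewrite ler_norml; lra.
by have := c_sub lt_jn (ltn_ord k); lra.
Qed.

End McShane.

Section LipschitzFree.
Variables (R : realType) (X Y : normedModType R).
Implicit Types (f : X -> Y) (S T : (X -> Y) -> Y) (s t : seq (R * X)).

Lemma lipnorm_le f k : (forall p q, `|f p - f q| <= k * `|p - q|) ->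
  (lipnorm f <= k%:E)%E.
Proof.
move=> f_lip; apply: ge_ereal_sup => _ [[p q] /= pq <-].
by rewrite lee_fin ler_pdivrMr ?normr_gt0 ?subr_eq0.
Qed.

Lemma lipnorm_lipschitz f k p q : (lipnorm f <= k%:E)%E ->
  `|f p - f q| <= k * `|p - q|.
Proof.
move=> f_k; have [->|pq] := eqVneq p q; first by rewrite !subrr !normr0 mulr0.
have : ((`|f p - f q| / `|p - q|)%:E <= lipnorm f)%E.
  by apply: ereal_sup_ubound; exists (p, q).
by move/le_trans/(_ f_k); rewrite lee_fin ler_pdivrMr ?normr_gt0 ?subr_eq0.
Qed.

Lemma Lip0_lipschitz1 f : f 0 = 0 -> (forall p q, `|f p - f q| <= `|p - q|) ->
  Lip0 f /\ (lipnorm f <= 1%:E)%E.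
Proof.
move=> f0 f_lip; have f_1 : (lipnorm f <= 1%:E)%E.
  by apply: lipnorm_le => p q; rewrite mul1r.
by split=> //; split=> //; apply: le_lt_trans f_1 (ltry _).
Qed.

Lemma op_norm_le T r :
  (forall f, Lip0 f -> (lipnorm f <= 1%:E)%E -> `|T f| <= r) ->
  (op_norm T <= r%:E)%E.
Proof.
by move=> T_r; apply: ge_ereal_sup => _ [f [f0 f1] <-]; rewrite lee_fin T_r.
Qed.

Lemma op_norm_ub T f : Lip0 f -> (lipnorm f <= 1%:E)%E ->
  (`|T f|%:E <= op_norm T)%E.
Proof. by move=> f0 f1; apply: ereal_sup_ubound; exists f. Qed.

Lemma op_norm_ge0 T : (0 <= op_norm T)%E.
Proof.
pose zero := fun _ : X => 0%R : Y.
have [zero0 zero1] : Lip0 zero /\ (lipnorm zero <= 1%:E)%E.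
  by apply: Lip0_lipschitz1 => // p q; rewrite subrr normr0.
exact: le_trans (op_norm_ub T zero0 zero1).
Qed.

Lemma op_norm_sub_le S T a b : (op_norm S <= a%:E)%E ->
  (op_norm (fun f => (S f - T f)%R) <= b%:E)%E -> (op_norm T <= (a + b)%:E)%E.
Proof.
move=> S_a ST_b; apply: op_norm_le => f f0 f1.
have := le_trans (op_norm_ub S f0 f1) S_a.
have := le_trans (op_norm_ub (fun f => S f - T f) f0 f1) ST_b.
rewrite !lee_fin => ST_f S_f.
by rewrite -[T f](subKr (S f)); apply: le_trans (ler_normB _ _) (lerD _ _).
Qed.

Lemma op_norm_delta_le (x : X) : (op_norm (delta (Y:=Y) x) <= `|x|%:E)%E.
Proof.
apply: op_norm_le => f [f0 _] f1.
by have := lipnorm_lipschitz x 0 f1; rewrite f0 !subr0 mul1r.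
Qed.

Lemma delta_comb_sub t s : (fun f => (delta_comb t f - delta_comb s f)%R) =
  delta_comb (t ++ [seq (- p.1, p.2) | p <- s]).
Proof.
apply: funext => f; rewrite /delta_comb big_cat big_map -sumrN; congr (_ + _).
by apply: eq_bigr => p _; rewrite scaleNr.
Qed.

Lemma beta_comb_sub t s :
  beta_comb t - beta_comb s = beta_comb (t ++ [seq (- p.1, p.2) | p <- s]).
Proof.
rewrite /beta_comb big_cat big_map -sumrN; congr (_ + _).
by apply: eq_bigr => p _; rewrite scaleNr.
Qed.

Lemma delta_comb1 (x : X) : delta_comb [:: (1, x)] = delta (Y:=Y) x.
Proof. by apply: funext => f; rewrite /delta_comb big_seq1 scale1r. Qed.

Lemma beta_comb1 (x : X) : beta_comb [:: (1, x)] = x.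
Proof. by rewrite /beta_comb big_seq1 scale1r. Qed.

Hypothesis Y_nontrivial : exists y : Y, y != 0.

Lemma norm_beta_comb_le t :
  (`|beta_comb t|%:E <= op_norm (delta_comb (Y:=Y) t))%E.
Proof.
have [y1 y1_1] : exists y1 : Y, `|y1| = 1.
  have [y y_neq0] := Y_nontrivial; exists (`|y|^-1 *: y).
  by rewrite normrZ ger0_norm ?invr_ge0 // mulVf // normr_eq0.
set v := beta_comb t; set n := size t.
pose x k := if k is k'.+1 then (nth (0, 0) t k').2 else v.
pose a k := (nth (0, 0) t k).1.
have [c [c0 dom]] := norm_dominated_exists x n.
have v_a : \sum_(k < n) a k *: x k.+1 = v.
  by rewrite /v /beta_comb (big_nth (0, 0)) big_mkord.
have c_a : \sum_(k < n) a k * c k.+1 = `|v|.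
  have := norm_dominated_eq0 (al := fun k => if k is k'.+1 then a k' else -1) dom.
  rewrite !big_ord_recl /= v_a c0 scaleN1r addNr mulN1r => /(_ erefl) /eqP.
  by rewrite addrC subr_eq0 => /eqP.
have c_le i : (i < n.+1)%N -> `|c i| <= `|x i| := norm_dominated_le dom.
have c_sub i j : (i < n.+1)%N -> (j < n.+1)%N -> c i - c j <= `|x i - x j|.
  exact: norm_dominated_sub dom.
pose F := mcshane n.+1 x c.
have F_x k : (k < n.+1)%N -> F (x k) = c k := mcshane_interp c_le c_sub (j := k).
pose f z := F z *: y1.
have [f0 f1] : Lip0 f /\ (lipnorm f <= 1%:E)%E.
  apply: Lip0_lipschitz1 => [|p q]; first by rewrite /f /F (mcshane0 c_le) scale0r.
  by rewrite -scalerBl normrZ y1_1 mulr1 mcshane_lipschitz.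
apply: le_trans (op_norm_ub _ f0 f1); rewrite lee_fin /delta_comb /delta.
rewrite (big_nth (0, 0)) big_mkord.
rewrite (eq_bigr (fun k : 'I_n => (a k * c k.+1) *: y1)) => [|k _].
  by rewrite -scaler_suml c_a normrZ y1_1 mulr1 normr_id.
by rewrite scalerA -(F_x k.+1) // ltnS.
Qed.

Lemma beta_limit_comb t : beta_limit (delta_comb (Y:=Y) t) (beta_comb t).
Proof.
move=> e e_gt0; exists e => // s; rewrite delta_comb_sub beta_comb_sub => lt_e.
by rewrite -lte_fin; apply: le_lt_trans (norm_beta_comb_le _) lt_e.
Qed.

Lemma betaE T z : FYX T -> beta_limit T z -> beta T = z.
Proof.
move=> [_ T_approx] T_z.
have T_beta : beta_limit T (beta T).
  exact: (xgetI 0 (P := [set z | beta_limit T z]) T_z).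
apply/eqP; rewrite -subr_eq0 -normr_le0; apply/ler_addgt0Pr => e e_gt0.
have e2_gt0 : 0 < e / 2 by rewrite divr_gt0.
have [d1 d1_gt0 near1] := T_beta _ e2_gt0.
have [d2 d2_gt0 near2] := T_z _ e2_gt0.
have d_gt0 : 0 < Num.min d1 d2 by rewrite lt_min d1_gt0.
have [s] := T_approx _ d_gt0; rewrite EFin_min lt_min => /andP[/near1 + /near2].
by have := ler_distD (beta_comb s) (beta T) z; rewrite (distrC (beta_comb s)); lra.
Qed.

Lemma norm_beta_le T r : FYX T -> (op_norm T <= r%:E)%E -> `|beta T| <= r.
Proof.
move=> FT T_r.
have [[z T_z]|no_lim] := pselect (exists z, beta_limit T z); last first.
  (* [beta T] is the default value [0]. *)
  rewrite /beta xgetPN => [|z T_z]; last by apply: no_lim; exists z.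
  by rewrite normr0 -lee_fin (le_trans (op_norm_ge0 T)).
rewrite (betaE FT T_z); apply/ler_addgt0Pr => e e_gt0.
have e2_gt0 : 0 < e / 2 by rewrite divr_gt0.
have [d d_gt0 near_z] := T_z _ e2_gt0.
have de_gt0 : 0 < Num.min d (e / 2) by rewrite lt_min d_gt0.
have [s] := FT.2 _ de_gt0; rewrite EFin_min lt_min => /andP[/near_z + /ltW s_e].
have : `|beta_comb s| <= r + e / 2.
  rewrite -lee_fin; apply: le_trans (norm_beta_comb_le s) _.
  exact: op_norm_sub_le T_r s_e.
by have := ler_distD (beta_comb s) z 0; rewrite !subr0; lra.
Qed.

Lemma FYX_delta (x : X) : FYX (delta (Y:=Y) x).
Proof.
split; first split => //; first exact: le_lt_trans (op_norm_delta_le x) (ltry _).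
move=> e e_gt0; exists [:: (1, x)]; rewrite delta_comb1.
apply: le_lt_trans (op_norm_le (r := 0) _) _ => [f _ _|].
  by rewrite subrr normr0.
by rewrite lte_fin.
Qed.

Lemma beta_delta (x : X) : beta (delta (Y:=Y) x) = x.
Proof.
apply: betaE (FYX_delta x) _.
by have := beta_limit_comb [:: (1, x)]; rewrite delta_comb1 beta_comb1.
Qed.

Lemma beta_unit_ball :
  @beta R X Y @` [set T | FYX T /\ (op_norm T <= 1)%E] = [set x : X | `|x| <= 1].
Proof.
apply/seteqP; split => [_ [T [FT T_1] <-]|x x_1]; first exact: norm_beta_le FT T_1.
exists (delta x); last exact: beta_delta.
by split; [exact: FYX_delta|exact: le_trans (op_norm_delta_le x) _].
Qed.

End LipschitzFree.

Theorem mainTheorem7 (R : realType) (X Y : completeNormedModType R)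
  (hY : exists y : Y, y != 0) :
  forall phi : {linear X -> R^o}, continuous phi ->
    @adj_beta_norm R X Y phi = dual_norm phi.
Proof.
move=> phi _; rewrite /adj_beta_norm.
rewrite -(image_comp (@beta R X Y) (fun x => (`|phi x|)%:E)).
by rewrite (@beta_unit_ball R X Y hY).
Qed.
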